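(* Let $0\le j\le\nu$, let integers $d\ge c\ge0$, and let $u\in\mathcal{O}_L[\epsilon_j]^\times$. Choose $F(X)\in X^n\cdot\mathcal{O}_K[[X]]$ with $F(\pi_L)=\pi_K$. Then the following are equivalent: (1) $F(\pi_L+u\pi_L^{c+1}\epsilon_j)\equiv\pi_K\pmod{\pi_L^{n+d}}$ in $\mathcal{O}_L[\epsilon_j]$; (2) there exists an $A_d$-algebra homomorphism $s_d:B_d\to B_d[\epsilon_j]$ with $s_d(\pi_L)=\pi_L+u\pi_L^{c+1}\epsilon_j$; (3) there exists an $A_d$-algebra homomorphism $s_d:B_d\to B_d[\epsilon_j]$ such that $s_d(b)-b\in\pi_L^{c+1}\epsilon_j B_d[\epsilon_j]$ for all $b\in B_d$, but it is not the case that $s_d(b)-b\in\pi_L^{c+1}\epsilon_j(\pi_L,\epsilon_j) B_d[\epsilon_j]$ for all $b\in B_d$.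
   Context: Let $p$ be a prime and $K$ a field complete with respect to a discrete valuation whose residue field is perfect of characteristic $p$. Fix a separable closure $K^{sep}$. $L/K$ is a finite totally ramified subextension of $K^{sep}/K$ of degree $n>1$, $\nu=v_p(n)$ ($v_p$ the $p$-adic valuation on $\mathbb{Z}$). $\mathcal{O}_K,\mathcal{O}_L$ are the valuation rings, $\mathcal{M}_L$ the maximal ideal of $\mathcal{O}_L$, $\pi_K,\pi_L$ uniformizers. For $d\ge0$ let $B_d=\mathcal{O}_L/\mathcal{M}_L^{n+d}$ and let $A_d=(\mathcal{O}_K+\mathcal{M}_L^{n+d})/\mathcal{M}_L^{n+d}$ be the image of $\mathcal{O}_K$ in $B_d$. For a ring $B$ and $0\le j\le\nu$, $B[\epsilon_j]=B[\epsilon]/(\epsilon^{p^{j+1}})$, where $\epsilon_j$ is the image of $\epsilon$ (so $\epsilon_j^{p^{j+1}}=0$); images of elements of $\mathcal{O}_L[\epsilon_j]$ in $B_d[\epsilon_j]$ are used implicitly. *)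

From HB Require Import structures.
From mathcomp Require Import all_boot all_order all_algebra.
From mathcomp Require Import vector falgebra fieldext separable.
Set Implicit Arguments. Unset Strict Implicit. Unset Printing Implicit Defensive.
Import Order.TTheory GRing.Theory Num.Theory.
Local Open Scope ring_scope.

(* A (normalized, Z-valued) valuation on a field: [v x] is only meaningful
   for [x != 0]; the value 0 is treated as having valuation +oo. *)
Definition is_valuation (F : fieldType) (v : F -> int) : Prop :=
  (forall x y, x != 0 -> y != 0 -> v (x * y) = v x + v y) /\
  (forall x y, x != 0 -> y != 0 -> x + y != 0 ->
     Num.min (v x) (v y) <= v (x + y)).

(* [vge v m x] : x lies in M^m, i.e. x = 0 or v x >= m.  [vge v 0] is the
   valuation ring. *)
Definition vge (F : fieldType) (v : F -> int) (m : int) (x : F) : Prop :=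
  x = 0 \/ m <= v x.

(* polynomials (in the variable epsilon) with coefficients in the valuation ring *)
Definition polyO (F : fieldType) (v : F -> int) (q : {poly F}) : Prop :=
  forall i, vge v 0 q`_i.

Section Setting.
Variables (K : fieldType) (L : fieldExtType K) (v : L -> int).

Definition K_complete : Prop :=
  forall a : nat -> K,
    (forall m : int, exists N, forall i k, (N <= i)%N -> (N <= k)%N ->
        vge v m ((a i - a k)%:A)) ->
    exists l : K, forall m : int, exists N, forall i, (N <= i)%N ->
        vge v m ((a i - l)%:A).

Definition residue_char (p : nat) : Prop := vge v 1 ((p%:R : K)%:A).
Definition residue_perfect (p : nat) : Prop :=
  forall a : K, vge v 0 a%:A ->
    exists b : K, vge v 0 b%:A /\ vge v 1 ((a - b ^+ p)%:A).

(* L/K totally ramified of degree n = [L:K] w.r.t. the normalized valuation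
   v of L (v(L^x) = Z): v(K^x) is contained in nZ; together with
   v(pi_K) = n this gives v(K^x) = nZ, i.e. e(L/K) = n. *)
Definition totally_ramified : Prop :=
  forall a : K, a != 0 -> ((\dim {:L})%:Z %| v a%:A)%Z.

Variables (piL : L) (N P : nat).

Definition inJ (q : {poly L}) : Prop :=
  exists z w, polyO v z /\ polyO v w /\
    q = (piL ^+ N)%:P * z + 'X^P * w.

(* congruence in B[eps_j] = O_L[eps]/(pi_L^N, eps^P) *)
Definition congJ (q1 q2 : {poly L}) : Prop := inJ (q1 - q2).

(* An A_d-algebra homomorphism B_d -> B_d[eps_j], B_d = O_L/pi_L^N,
   B_d[eps_j] = O_L[eps]/(pi_L^N, eps^P), given through a lift
   s : O_L -> O_L[eps] (values outside O_L are irrelevant). *)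
Definition Ad_alg_hom (s : L -> {poly L}) : Prop :=
  [/\ forall x, vge v 0 x -> polyO v (s x),
      forall x y, vge v 0 x -> vge v 0 y -> vge v N%:Z (x - y) ->
        congJ (s x) (s y),
      forall x y, vge v 0 x -> vge v 0 y -> congJ (s (x + y)) (s x + s y),
      forall x y, vge v 0 x -> vge v 0 y -> congJ (s (x * y)) (s x * s y) &
      forall a : K, vge v 0 a%:A -> congJ (s a%:A) (a%:A)%:P].

End Setting.

(* Every [b] in [O_L] is [R_b(piL)] for a polynomial [R_b] over [O_K] of
   degree [< n], since the powers [piL^i], [i < n], have valuations distinct
   modulo [n]; so an [A_d]-algebra map satisfies [s(b) = R_b(s(piL))] modulo
   [J = (piL^(n+d), eps^(p^(j+1)))].
   (1) -> (2): [s(b) := R_b(e)] is well defined and multiplicative modulo [J]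
   because every [r] over [O_K] with [r(piL) = 0 mod piL^(n+d)] has
   [r(e) = 0 mod J]: modulo a truncation [U X^n - pi_K] of [F - pi_K] and
   [X^(n+d)], [X^n] is a multiple of [pi_K], which reduces [r] to degree [< n],
   where [r(piL) = 0 mod piL^(n+d)] holds coefficientwise.
   (2) -> (3): [s(b) - b = R_b(e) - R_b(piL)] is divisible by [e - piL], and
   the [eps]-coefficient of [s(piL) - piL] has valuation exactly [c+1 < n+d].
   (3) -> (1): [s(piL) = piL + piL^(c+1) eps x] where [x(0)] is a unit, as
   otherwise the finer condition would hold; [F(s(piL)) = s(pi_K)] says that
   [H(eps x)] is in [J] for an [H] independent of [x], and as [x(0)] and
   [u(0)] are units this is equivalent to [H] in [J], hence to [H(eps u)]
   in [J], which is (1). *)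

From HB Require Import structures.
From mathcomp Require Import all_boot all_order all_algebra.
From mathcomp Require Import vector falgebra fieldext separable.
From mathcomp Require Import boolp zify ring.
Import Order.TTheory GRing.Theory Num.Theory.
Set Implicit Arguments. Unset Strict Implicit. Unset Printing Implicit Defensive.
Local Open Scope ring_scope.

Section Valuation.
Variables (F : fieldType) (v : F -> int).
Hypothesis hv : is_valuation v.

Lemma valM x y : x != 0 -> y != 0 -> v (x * y) = v x + v y.
Proof. by case: hv => + _; apply. Qed.

Lemma val1 : v 1 = 0.
Proof.
have := valM (oner_neq0 F) (oner_neq0 F); rewrite mulr1 => /esym.
by rewrite -{3}[v 1]addr0 => /addrI.
Qed.

Lemma valN x : v (- x) = v x.
Proof.
have [->|x0] := eqVneq x 0; first by rewrite oppr0.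
have N10 : (-1 : F) != 0 by rewrite oppr_eq0 oner_neq0.
have vN1 : v (-1) = 0 by have := valM N10 N10; rewrite mulrNN mulr1 val1; lia.
by rewrite -mulN1r valM // vN1 add0r.
Qed.

Lemma valV x : x != 0 -> v x^-1 = - v x.
Proof. by move=> x0; apply/eqP; rewrite -subr_eq0 opprK -valM ?invr_eq0 // mulVf ?val1. Qed.

Lemma valX x k : x != 0 -> v (x ^+ k) = k%:Z * v x.
Proof.
move=> x0; elim: k => [|k IH]; first by rewrite expr0 val1 mul0r.
by rewrite exprS valM ?expf_neq0 // IH intS mulrDl mul1r.
Qed.

Lemma valD_neq x y : x != 0 -> y != 0 -> v x != v y ->
  x + y != 0 /\ v (x + y) = Num.min (v x) (v y).
Proof.
wlog lt : x y / v x < v y => [hwlog x0 y0 neq|x0 y0 _].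
  have [lt|lt] : v x < v y \/ v y < v x by case: ltgtP neq => // *; [left|right].
    exact: hwlog.
  by rewrite addrC minC; apply: hwlog; rewrite // eq_sym.
have xy0 : x + y != 0.
  by apply: contraTneq lt => /eqP; rewrite addr_eq0 => /eqP ->; rewrite valN ltxx.
split=> //; rewrite (min_l (ltW lt)); apply/eqP; rewrite eq_le.
case: hv => _ /(_ x y x0 y0 xy0); rewrite (min_l (ltW lt)) => ->; rewrite andbT.
case: hv => _ /(_ (x + y) (- y) xy0); rewrite oppr_eq0 addrK valN ge_min => /(_ y0 x0).
by case/orP => // le; move: lt; rewrite ltNge le.
Qed.

Lemma vge0 m : vge v m 0. Proof. by left. Qed.

Lemma vge_val m x : x != 0 -> vge v m x -> m <= v x.
Proof. by move=> x0 [/eqP|]; rewrite ?(negbTE x0). Qed.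

Lemma vge0_unit a : vge v 0 a -> ~ vge v 1 a -> a != 0 /\ v a = 0.
Proof.
move=> ha na; have a0 : a != 0 by apply: contra_not_neq na => ->; left.
split=> //; apply/eqP; rewrite eq_le (vge_val a0 ha) andbT leNgt.
by apply/negP => pos; apply: na; right.
Qed.

Lemma valD_unit a x : a != 0 -> v a = 0 -> vge v 1 x -> x + a != 0 /\ v (x + a) = 0.
Proof.
move=> a0 va hx; have [->|x0] := eqVneq x 0; first by rewrite add0r.
have lt : v a < v x by rewrite va; apply: lt_le_trans (vge_val x0 hx).
by have [-> ->] := valD_neq x0 a0 (negbT (gt_eqF lt)); rewrite min_r // ltW.
Qed.

Lemma vge_le m m' x : m' <= m -> vge v m x -> vge v m' x.
Proof. by move=> le [->|h]; [left|right; apply: le_trans h]. Qed.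

Lemma vgeD m x y : vge v m x -> vge v m y -> vge v m (x + y).
Proof.
move=> [->|hx]; first by rewrite add0r.
move=> [->|hy]; first by rewrite addr0; right.
have [->|xy0] := eqVneq (x + y) 0; first exact: vge0.
have [->|x0] := eqVneq x 0; first by rewrite add0r; right.
have [->|y0] := eqVneq y 0; first by rewrite addr0; right.
by right; case: hv => _ /(_ x y x0 y0 xy0); apply: le_trans; rewrite le_min hx hy.
Qed.

Lemma vgeN m x : vge v m x -> vge v m (- x).
Proof. by case=> [->|h]; [left; rewrite oppr0|right; rewrite valN]. Qed.

Lemma vgeB m x y : vge v m x -> vge v m y -> vge v m (x - y).
Proof. by move=> hx /vgeN; apply: vgeD. Qed.

Lemma vge_sum m (I : Type) (r : seq I) (P : pred I) (G : I -> F) :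
  (forall i, P i -> vge v m (G i)) -> vge v m (\sum_(i <- r | P i) G i).
Proof. by move=> h; apply: big_ind => //; [apply: vge0|apply: vgeD]. Qed.

Lemma vgeM a b x y : vge v a x -> vge v b y -> vge v (a + b) (x * y).
Proof.
move=> [->|hx]; first by rewrite mul0r; left.
move=> [->|hy]; first by rewrite mulr0; left.
have [->|x0] := eqVneq x 0; first by rewrite mul0r; left.
have [->|y0] := eqVneq y 0; first by rewrite mulr0; left.
by right; rewrite valM // lerD.
Qed.

Lemma vgeMl m x y : vge v 0 x -> vge v m y -> vge v m (x * y).
Proof. by move=> hx /(vgeM hx); rewrite add0r. Qed.

Lemma vgeMr m x y : vge v m x -> vge v 0 y -> vge v m (x * y).
Proof. by move=> hx /(vgeM hx); rewrite addr0. Qed.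

Lemma vge1 : vge v 0 1. Proof. by right; rewrite val1. Qed.

Lemma vgeX m x k : vge v m x -> vge v (k%:Z * m) (x ^+ k).
Proof.
move=> h; elim: k => [|k IH]; first by rewrite expr0 mul0r; apply: vge1.
by rewrite exprS intS mulrDl mul1r; apply: vgeM.
Qed.

Lemma vge_eq0 x : (forall m, vge v m x) -> x = 0.
Proof.
move=> h; have [//|x0] := eqVneq x 0.
by have := vge_val x0 (h (v x + 1)); rewrite gerDl.
Qed.

Section DistinctValuations.
Variables (I : eqType) (t : I -> F).

Definition distinct_vals (r : seq I) :=
  {in r &, forall i j, i != j -> t i != 0 -> t j != 0 -> v (t i) != v (t j)}.

Lemma sum_distinct_vals r : uniq r -> distinct_vals r ->
  (\sum_(i <- r) t i != 0 ->
     exists2 i, i \in r & t i != 0 /\ v (\sum_(i <- r) t i) = v (t i)) /\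
  (forall m, vge v m (\sum_(i <- r) t i) -> {in r, forall i, vge v m (t i)}).
Proof.
elim: r => [|x r IH] /=; first by rewrite big_nil eqxx.
move=> /andP[xr ur] dt; rewrite big_cons.
have [|IH1 IH2] := IH ur; first by move=> i j ir jr; apply: dt; rewrite inE ?ir ?jr orbT.
set S := \sum_(i <- r) t i in IH1 IH2 *.
have [tx0|tx0] := eqVneq (t x) 0.
  rewrite tx0 add0r; split=> [/IH1 [i ir hi]|m hm i]; first by exists i; rewrite // inE ir orbT.
  by rewrite inE => /predU1P [->|/IH2]; [rewrite tx0; apply: vge0|apply].
have [S0|S0] := eqVneq S 0.
  rewrite S0 addr0; split=> [_|m hm i]; first by exists x; rewrite ?inE ?eqxx.
  by rewrite inE => /predU1P [->//|/(IH2 m)]; apply; rewrite S0; apply: vge0.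
have [i ir [ti0 vS]] := IH1 S0.
have neq : v (t x) != v S.
  by rewrite vS dt ?inE ?eqxx ?ir ?orbT //; apply: contraNneq xr => ->.
have [sum0 vsum] := valD_neq tx0 S0 neq.
split=> [_|m hm j].
  by case: leP vsum => _ ->; [exists x; rewrite ?inE ?eqxx|exists i; rewrite ?inE ?ir ?orbT].
have := vge_val sum0 hm; rewrite vsum le_min => /andP [mx mS].
rewrite inE => /predU1P [->|jr]; first by right.
by apply: IH2 jr; right.
Qed.

Lemma vge_sum_distinct r m : uniq r -> distinct_vals r ->
  vge v m (\sum_(i <- r) t i) -> {in r, forall i, vge v m (t i)}.
Proof. by move=> ur dt; have [_] := sum_distinct_vals ur dt; apply. Qed.

End DistinctValuations.
End Valuation.

Lemma dvdz_addn_small_inj (n : nat) (A B : int) (i j : nat) :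
  (i < n)%N -> (j < n)%N -> (n%:Z %| A)%Z -> (n%:Z %| B)%Z ->
  A + i%:Z = B + j%:Z -> i = j.
Proof.
move=> hi hj /dvdzP [a ->] /dvdzP [b ->] /(congr1 (fun x => (x %% n%:Z)%Z)).
by rewrite !modzMDl !modz_nat !modn_small // => -[].
Qed.

Lemma dvdz_le_opp (n : nat) (A : int) : (n%:Z %| A)%Z -> A < 0 -> A <= - n%:Z.
Proof.
move=> /dvdzP [q ->]; case: n => [|n]; first by rewrite mulr0 ltxx.
by rewrite pmulr_llt0 // -mulN1r ler_pM2r // => q0; lia.
Qed.

Section ValuationRing.
Variables (F : fieldType) (v : F -> int).

(* The premise [is_valuation v] inside the predicate makes its closure
   properties hold unconditionally, so that the subring instance needs no
   hypothesis. *)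
Definition vring : {pred F} := fun x => `[< is_valuation v -> vge v 0 x >].

Fact vring_subring_closed : subring_closed vring.
Proof.
split=> [|x y /asboolP hx /asboolP hy|x y /asboolP hx /asboolP hy]; apply/asboolP=> hv.
- exact: vge1.
- exact: vgeB (hx hv) (hy hv).
- exact: vgeMl (hx hv) (hy hv).
Qed.
HB.instance Definition _ := GRing.isSubringClosed.Build F vring vring_subring_closed.

Hypothesis hv : is_valuation v.

Lemma vringP x : reflect (vge v 0 x) (x \in vring).
Proof. by apply: (iffP (asboolP _)) => [|h _]; [apply|]. Qed.

Lemma polyOP q : polyO v q <-> q \is a polyOver vring.
Proof. by split=> [h|/polyOverP h i]; [apply/polyOverP => i|]; apply/vringP. Qed.

End ValuationRing.

Section ValuationRingK.
Variables (K : fieldType) (L : fieldExtType K) (v : L -> int).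

Definition vringK : {pred L} := fun x => (x \in vring v) && (x \in 1%VS).

Fact vringK_subring_closed : subring_closed vringK.
Proof.
split=> [|x y /andP[hx1 hx2] /andP[hy1 hy2]|x y /andP[hx1 hx2] /andP[hy1 hy2]].
- by rewrite /vringK unfold_in /= !rpred1.
- by rewrite /vringK unfold_in /= !rpredB.
- by rewrite /vringK unfold_in /= !rpredM.
Qed.
HB.instance Definition _ := GRing.isSubringClosed.Build L vringK vringK_subring_closed.

End ValuationRingK.

Lemma comp_polyB_factor (R : comNzRingType) (S : subringClosed R) (p x y : {poly R}) :
  p \is a polyOver S -> x \is a polyOver S -> y \is a polyOver S ->
  exists2 q, q \is a polyOver S & (p \Po x) - (p \Po y) = (x - y) * q.
Proof.
move=> + Sx Sy; elim/poly_ind: p => [|p c IH] Sp.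
  by exists 0; [exact: rpred0|rewrite !comp_poly0 subrr mulr0].
have Sp' : p \is a polyOver S.
  by apply/polyOverP => i; move/polyOverP/(_ i.+1): Sp; rewrite coefD coefMX coefC addr0.
have [q Sq eq] := IH Sp'.
exists (q * x + (p \Po y)); first by rewrite rpredD ?rpredM ?(polyOver_comp Sp').
rewrite !comp_poly_MXaddC.
by transitivity (((p \Po x) - (p \Po y)) * x + (p \Po y) * (x - y)); [ring|rewrite eq; ring].
Qed.

Section Setting.
Variables (K : fieldType) (L : fieldExtType K) (v : L -> int).
Hypothesis hv : is_valuation v.
Variable piL : L.
Hypothesis hpiL0 : piL != 0.
Hypothesis hpiL : v piL = 1.
Hypothesis htot : totally_ramified v.

Local Notation n := (\dim {:L}).
Local Notation polyOP := (polyOP hv).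
Local Notation vringP := (vringP hv).

Lemma polyOD p q : polyO v p -> polyO v q -> polyO v (p + q).
Proof. by move=> /polyOP hp /polyOP hq; apply/polyOP; apply: rpredD. Qed.

Lemma polyOB p q : polyO v p -> polyO v q -> polyO v (p - q).
Proof. by move=> /polyOP hp /polyOP hq; apply/polyOP; apply: rpredB. Qed.

Lemma polyOM p q : polyO v p -> polyO v q -> polyO v (p * q).
Proof. by move=> /polyOP hp /polyOP hq; apply/polyOP; apply: rpredM. Qed.

Lemma polyOX p k : polyO v p -> polyO v (p ^+ k).
Proof. by move=> /polyOP hp; apply/polyOP; apply: rpredX. Qed.

Lemma polyOC c : vge v 0 c -> polyO v c%:P.
Proof. by move=> /vringP hc; apply/polyOP; rewrite polyOverC. Qed.

Lemma polyO_X : polyO v 'X.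
Proof. by apply/polyOP; apply: polyOverX. Qed.

Lemma polyO_comp p q : polyO v p -> polyO v q -> polyO v (p \Po q).
Proof. by move=> /polyOP hp /polyOP hq; apply/polyOP; apply: polyOver_comp. Qed.

Lemma polyO_vringK p : p \is a polyOver (vringK v) -> polyO v p.
Proof. by move/polyOverP => h i; apply/vringP; case/andP: (h i). Qed.

Lemma vge_horner p x : polyO v p -> vge v 0 x -> vge v 0 p.[x].
Proof. by move=> /polyOP hp /vringP hx; apply/vringP; apply: rpred_horner. Qed.

Lemma val_piX k : v (piL ^+ k) = k%:Z.
Proof. by rewrite valX // hpiL mulr1. Qed.

Lemma vge_piX k : vge v k%:Z (piL ^+ k).
Proof. by right; rewrite val_piX. Qed.
Arguments vge_piX k.

Lemma vge0_piX k : vge v 0 (piL ^+ k).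
Proof. exact: vge_le (vge_piX k). Qed.
Arguments vge0_piX k.

Lemma vge0_pi : vge v 0 piL.
Proof. by have := vge0_piX 1; rewrite expr1. Qed.

Lemma vge_divX m k x : vge v (m + k%:Z) x -> vge v m (x / piL ^+ k).
Proof.
have [->|x0 hx] := eqVneq x 0; first by rewrite mul0r; left.
right; rewrite valM ?invr_eq0 ?expf_neq0 // valV ?expf_neq0 // val_piX.
by rewrite lerBrDr; apply: vge_val hx.
Qed.

Lemma distinct_vals_Kterms (t : 'I_n -> L) : (forall i, t i \in 1%VS) ->
  distinct_vals v (fun i : 'I_n => t i * piL ^+ i) (index_enum 'I_n).
Proof.
move=> tK i j _ _ ij ti0 tj0; have [a ta] := vlineP _ _ (tK i); have [b tb] := vlineP _ _ (tK j).
move: ti0 tj0; rewrite ta tb !mulf_eq0 !negb_or !expf_eq0 (negbTE hpiL0) !andbF.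
move=> /andP [a0 _] /andP [b0 _]; apply: contra ij => /eqP.
rewrite !valM ?expf_neq0 // !val_piX => eq; apply/eqP/val_inj.
move: a0 b0; rewrite !scaler_eq0 !oner_eq0 !orbF => a0 b0.
by apply: (dvdz_addn_small_inj (ltn_ord i) (ltn_ord j) (htot a0) (htot b0)).
Qed.

Lemma vge_Kterms (t : 'I_n -> L) m : (forall i, t i \in 1%VS) ->
  vge v m (\sum_(i < n) t i * piL ^+ i) -> forall i, vge v m (t i * piL ^+ i).
Proof.
move=> tK hm i; apply: (vge_sum_distinct hv _ (distinct_vals_Kterms tK)) => //.
  exact: index_enum_uniq.
by rewrite mem_index_enum.
Qed.

(* [v a] is a multiple of [n], so [v a + i >= 0] with [i < n] forces [v a >= 0]. *)
Lemma vge0_Kterm (a : L) (i : nat) : a \in 1%VS -> (i < n)%N ->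
  vge v 0 (a * piL ^+ i) -> vge v 0 a.
Proof.
move=> /vlineP [k ->] hi; have [->|k0] := eqVneq k 0; first by rewrite scale0r; left.
have kL0 : k *: 1 != 0 :> L by rewrite scaler_eq0 oner_eq0 orbF.
move/(vge_val (mulf_neq0 kL0 (expf_neq0 _ hpiL0))); rewrite valM ?expf_neq0 // val_piX => h.
right; rewrite leNgt; apply/negP => neg; have := dvdz_le_opp (htot k0) neg.
by move: h neg; move: (v _) => w; lia.
Qed.

Definition pows : n.-tuple L := [tuple piL ^+ i | i < n].

Lemma pows_free : free pows.
Proof.
apply/freeP => k hk i; pose t j := (k j)%:A : L.
have tK j : t j \in 1%VS by rewrite rpredZ ?rpred1.
have sum0 : \sum_(j < n) t j * piL ^+ j = 0.
  by rewrite -[RHS]hk; apply: eq_bigr => j _; rewrite nth_mktuple mulr_algl.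
have /eqP : t i * piL ^+ i = 0.
  by apply: vge_eq0 => m; apply: vge_Kterms => //; rewrite sum0; apply: vge0.
by rewrite mulf_eq0 expf_eq0 (negbTE hpiL0) andbF orbF scaler_eq0 oner_eq0 orbF => /eqP.
Qed.

Lemma pows_basis : basis_of fullv pows.
Proof. by rewrite basisEfree pows_free subvf size_tuple leqnn. Qed.

Definition expansion (b : L) : {poly L} :=
  \sum_(i < n) ((coord pows i b)%:A)%:P * 'X^i.

Lemma horner_expansionE b :
  (expansion b).[piL] = \sum_(i < n) (coord pows i b)%:A * piL ^+ i.
Proof. by rewrite horner_sum; apply: eq_bigr => i _; rewrite hornerCM hornerXn. Qed.

Lemma horner_expansion b : (expansion b).[piL] = b.
Proof.
rewrite horner_expansionE {2}(coord_basis pows_basis (memvf b)).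
by apply: eq_bigr => i _; rewrite nth_mktuple mulr_algl.
Qed.

Lemma expansion_vringK b : vge v 0 b -> expansion b \is a polyOver (vringK v).
Proof.
move=> hb; apply: rpred_sum => i _; rewrite rpredM ?rpredX ?polyOverX // polyOverC.
have tK j : (coord pows j b)%:A \in (1%VS : {vspace L}) by rewrite rpredZ ?rpred1.
rewrite /vringK unfold_in /= tK andbT; apply/vringP.
apply: vge0_Kterm (tK i) (ltn_ord i) _.
apply: (vge_Kterms (t := fun j => (coord pows j b)%:A)) => //.
by rewrite -horner_expansionE horner_expansion.
Qed.

Section Ideal.
Variables N P : nat.
Local Notation inJ := (inJ v piL N P).
Local Notation congJ := (congJ v piL N P).

Lemma inJP q : inJ q <-> polyO v q /\ (forall i, (i < P)%N -> vge v N q`_i).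
Proof.
split=> [[z [w [hz [hw ->]]]]|[hq hlow]].
  split=> i; rewrite coefD coefCM coefXnM.
    apply: (vgeD hv); first exact: (vgeMl hv (vge0_piX N) (hz i)).
    by case: ifP => _; [apply: vge0|apply: hw].
  by move=> ->; rewrite addr0; apply: (vgeMr hv) (vge_piX N) (hz i).
exists (\poly_(i < P) (q`_i / piL ^+ N)), (drop_poly P q); split; [|split].
- move=> i; rewrite coef_poly; case: ifP => hi; last exact: vge0.
  by apply: vge_divX; rewrite add0r; apply: hlow.
- by move=> i; rewrite coef_drop_poly.
- apply/polyP => i; rewrite coefD coefCM coefXnM coef_poly coef_drop_poly.
  case: ltnP => hi; first by rewrite mulrC divfK ?expf_neq0 // addr0.
  by rewrite mulr0 add0r subnK.
Qed.

Lemma inJ0 : inJ 0.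
Proof. by apply/inJP; split=> i; rewrite coef0 => *; apply: vge0. Qed.

Lemma inJD p q : inJ p -> inJ q -> inJ (p + q).
Proof.
move=> /inJP [hp lp] /inJP [hq lq]; apply/inJP; split; first exact: polyOD.
by move=> i hi; rewrite coefD; apply: (vgeD hv); [apply: lp|apply: lq].
Qed.

Lemma inJN p : inJ p -> inJ (- p).
Proof.
move=> /inJP [hp lp]; apply/inJP; split=> [i|i hi]; rewrite coefN; apply: (vgeN hv).
  exact: hp.
exact: lp.
Qed.

Lemma inJB p q : inJ p -> inJ q -> inJ (p - q).
Proof. by move=> hp /inJN; apply: inJD. Qed.

Lemma inJ_sum (I : Type) (r : seq I) (Q : pred I) (G : I -> {poly L}) :
  (forall i, Q i -> inJ (G i)) -> inJ (\sum_(i <- r | Q i) G i).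
Proof. by move=> h; apply: big_ind => //; [apply: inJ0|apply: inJD]. Qed.

Lemma inJMr p q : inJ p -> polyO v q -> inJ (p * q).
Proof.
move=> /inJP [hp lp] hq; apply/inJP; split=> [|i hi]; first exact: polyOM.
rewrite coefM; apply: (vge_sum hv) => j _; apply: (vgeMr hv) (hq _).
by apply: lp; apply: leq_ltn_trans hi; rewrite -ltnS.
Qed.

Lemma inJMl p q : polyO v p -> inJ q -> inJ (p * q).
Proof. by move=> hp hq; rewrite mulrC; apply: inJMr. Qed.

Lemma inJ_piN z : polyO v z -> inJ ((piL ^+ N)%:P * z).
Proof.
move=> hz; exists z, 0; do 2?split => //; last by rewrite mulr0 addr0.
by move=> i; rewrite coef0; apply: vge0.
Qed.

Lemma inJ_XP w : polyO v w -> inJ ('X^P * w).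
Proof.
move=> hw; exists 0, w; do 2?split => //; last by rewrite mulr0 add0r.
by move=> i; rewrite coef0; apply: vge0.
Qed.

Lemma inJC c : vge v N c -> inJ c%:P.
Proof.
move=> hc; apply/inJP; split=> [|i _]; last by rewrite coefC; case: ifP => _; [|apply: vge0].
by apply: polyOC; apply: vge_le hc.
Qed.

Lemma congJ_refl p : congJ p p.
Proof. by rewrite /congJ subrr; apply: inJ0. Qed.

Lemma congJ_sym p q : congJ p q -> congJ q p.
Proof. by rewrite /congJ -[q - p]opprB; apply: inJN. Qed.

Lemma congJ_trans p q r : congJ p q -> congJ q r -> congJ p r.
Proof. by rewrite /congJ => h1 /(inJD h1); rewrite addrA subrK. Qed.

Lemma congJD p q p' q' : congJ p p' -> congJ q q' -> congJ (p + q) (p' + q').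
Proof. by rewrite /congJ => h1 /(inJD h1); rewrite opprD addrACA. Qed.

Lemma congJM p q p' q' : polyO v p -> polyO v q' -> congJ p p' -> congJ q q' ->
  congJ (p * q) (p' * q').
Proof.
rewrite /congJ => hp hq' h1 h2.
have -> : p * q - p' * q' = p * (q - q') + (p - p') * q' by ring.
by apply: inJD; [apply: inJMl|apply: inJMr].
Qed.

Lemma congJ_comp r x y : polyO v r -> polyO v x -> polyO v y -> congJ x y ->
  congJ (r \Po x) (r \Po y).
Proof.
move=> /polyOP hr /polyOP hx /polyOP hy hxy.
rewrite /congJ; have [q /polyOP hq ->] := comp_polyB_factor hr hx hy; exact: inJMr.
Qed.

Lemma inJ_compXy p y : inJ p -> polyO v y -> inJ (p \Po ('X * y)).
Proof.
move=> [z [w [hz [hw ->]]]] hy; have hXy : polyO v ('X * y) by apply: polyOM; first exact: polyO_X.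
rewrite comp_polyD !comp_polyM comp_polyC comp_Xn_poly exprMn -mulrA.
apply: inJD; first by apply: inJ_piN; apply: polyO_comp.
by apply: inJ_XP; apply: polyOM; [apply: polyOX|apply: polyO_comp].
Qed.

Lemma alg_hom_horner s r : Ad_alg_hom v piL N P s -> r \is a polyOver (vringK v) ->
  congJ (s r.[piL]) (r \Po s piL).
Proof.
case=> hO _ hadd hmul hK; elim/poly_ind: r => [|r c IH] hrc.
  by have := hK 0; rewrite scale0r horner0 comp_poly0; apply; apply: vge0.
have /andP [/vringP hc /vlineP [a ea]] : c \in vringK v.
  by move/polyOverP/(_ 0): hrc; rewrite coefD coefMX coefC add0r.
have hr : r \is a polyOver (vringK v).
  by apply/polyOverP => i; move/polyOverP/(_ i.+1): hrc; rewrite coefD coefMX coefC addr0.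
have hrpi : vge v 0 r.[piL] by apply: vge_horner vge0_pi; apply: polyO_vringK.
rewrite hornerMXaddC comp_poly_MXaddC; apply: congJ_trans (hadd _ _ _ _) _ => //.
  exact: (vgeMr hv) vge0_pi.
apply: congJD; last by rewrite ea; apply: hK; rewrite -ea.
apply: congJ_trans (hmul _ _ hrpi vge0_pi) _.
by apply: congJM; [apply: hO|apply: hO vge0_pi|apply: IH|apply: congJ_refl].
Qed.

Lemma alg_hom_shift s D b : Ad_alg_hom v piL N P s -> polyO v D ->
  congJ (s piL) (piL%:P + D) -> vge v 0 b ->
  exists2 Q, polyO v Q & inJ (s b - b%:P - D * Q).
Proof.
move=> hs hD hspi hb; have [hO _ _ _ _] := hs.
have hR := expansion_vringK hb; have hRO := polyO_vringK hR.
have hpi : polyO v piL%:P by apply: polyOC vge0_pi.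
have hpiD : polyO v (piL%:P + D) by apply: polyOD.
have [Q /polyOP hQ eQ] : exists2 Q, Q \is a polyOver (vring v) &
    (expansion b \Po (piL%:P + D)) - (expansion b \Po piL%:P) = (piL%:P + D - piL%:P) * Q.
  by apply: comp_polyB_factor; apply/polyOP.
exists Q => //; move: eQ; rewrite comp_polyCr horner_expansion addrAC subrr add0r.
move=> /eqP; rewrite subr_eq => /eqP eR.
rewrite -addrA -opprD [b%:P + _]addrC -eR.
have := congJ_trans (alg_hom_horner hs hR) (congJ_comp hRO (hO _ vge0_pi) hpiD hspi).
by rewrite horner_expansion.
Qed.

Lemma inJ_of_comp_Xunit p x : polyO v p -> polyO v x -> x`_0 != 0 -> v x`_0 = 0 ->
  inJ (p \Po ('X * x)) -> inJ p.
Proof.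
move=> hp hx x0 vx0 hJ; apply/inJP; split=> //.
suff low k : (k <= P)%N -> forall l, (l < k)%N -> vge v N p`_l by apply: low.
elim: k => [//|k IH] hk l; rewrite ltnS leq_eqVlt => /predU1P [->|]; last exact: IH (ltnW hk) l.
have ht : inJ (take_poly k p).
  apply/inJP; split=> i; rewrite coef_take_poly; case: ifP => hik; try by move=> *; apply: vge0.
    exact: hp.
  by move=> _; apply: IH (ltnW hk) _ hik.
have hD : inJ ((drop_poly k p * 'X^k) \Po ('X * x)).
  have := inJB hJ (inJ_compXy ht hx).
  by rewrite -{1}(poly_take_drop k p) comp_polyD addrC addKr.
rewrite comp_polyM comp_Xn_poly exprMn mulrCA in hD.
have := (proj1 (inJP _) hD).2 k hk.
rewrite coefXnM ltnn subnn -horner_coef0 hornerM horner_exp horner_comp hornerM hornerX mul0r.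
rewrite !horner_coef0 coef_drop_poly add0n.
have [->|pk0] := eqVneq p`_k 0; first by move=> _; apply: vge0.
case=> [/eqP|h]; first by rewrite mulf_eq0 expf_eq0 (negbTE x0) andbF (negbTE pk0).
by right; move: h; rewrite valM ?expf_neq0 // valX // vx0 mulr0 addr0.
Qed.

(* [E] is a root modulo [J] of [U X^n - pK], a truncation of the Eisenstein
   equation [F(X) - pi_K] of [piL]. *)
Section Reduction.
Variables (E U : {poly L}) (pK : L).
Hypothesis hE : exists2 w, polyO v w & E = piL%:P * w.
Hypothesis hpK : pK \in vringK v.
Hypothesis hpKn : vge v n%:Z pK.
Hypothesis hU : U \is a polyOver (vringK v).
Hypothesis hU0 : U`_0 != 0.
Hypothesis hvU0 : v U`_0 = 0.
Local Notation G := (U * 'X^n - pK%:P).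
Hypothesis hGpi : vge v N G.[piL].
Hypothesis hGE : inJ (G \Po E).

Lemma polyO_E : polyO v E.
Proof. by case: hE => w hw ->; apply: polyOM; first by apply: polyOC; apply: vge0_pi. Qed.

Lemma E_expr k : exists2 w, polyO v w & E ^+ k = (piL ^+ k)%:P * w.
Proof. by case: hE => w hw ->; exists (w ^+ k); [apply: polyOX|rewrite exprMn polyC_exp]. Qed.

Definition vanishing r := vge v N r.[piL] /\ inJ (r \Po E).

Lemma vanishingD p q : vanishing p -> vanishing q -> vanishing (p + q).
Proof.
case=> hp1 hp2 [hq1 hq2]; rewrite /vanishing hornerD comp_polyD.
by split; [apply: (vgeD hv)|apply: inJD].
Qed.

Lemma vanishingMl q r : polyO v q -> vanishing r -> vanishing (q * r).
Proof.
move=> hq [hr1 hr2]; rewrite /vanishing hornerM comp_polyM; split.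
  by apply: (vgeMl hv) hr1; apply: vge_horner vge0_pi.
by apply: inJMl => //; apply: polyO_comp polyO_E.
Qed.

Lemma vanishingMr q r : vanishing q -> polyO v r -> vanishing (q * r).
Proof. by move=> hq hr; rewrite mulrC; apply: vanishingMl. Qed.

Lemma vanishing_XN q : polyO v q -> vanishing ('X^N * q).
Proof.
move=> hq; apply: vanishingMr hq; rewrite /vanishing hornerXn comp_Xn_poly.
split; first exact: vge_piX.
by have [w hw ->] := E_expr N; apply: inJ_piN.
Qed.

Lemma vanishingC c : vge v N c -> vanishing c%:P.
Proof. by move=> hc; rewrite /vanishing hornerC comp_polyC; split => //; apply: inJC. Qed.

Local Notation u0 := U`_0.
Local Notation T := (1 - (u0^-1)%:P * U).

(* An inverse of [U] modulo [X^N]. *)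
Definition Uinv := (u0^-1)%:P * \sum_(k < N) T ^+ k.

Lemma u0V_vringK : u0^-1 \in vringK v.
Proof.
have /andP [_ u0K] : u0 \in vringK v by move/polyOverP: hU.
by rewrite /vringK unfold_in /= rpredV u0K andbT; apply/vringP; right; rewrite valV // hvU0.
Qed.

Lemma T_vringK : T \is a polyOver (vringK v).
Proof. by rewrite rpredB ?rpred1 ?rpredM ?polyOverC ?u0V_vringK. Qed.

Lemma Uinv_vringK : Uinv \is a polyOver (vringK v).
Proof.
by rewrite rpredM ?polyOverC ?u0V_vringK // rpred_sum // => k _; rewrite rpredX ?T_vringK.
Qed.

Lemma U_Uinv : U * Uinv = 1 - T ^+ N.
Proof.
rewrite /Uinv mulrA [U * _]mulrC.
transitivity ((1 - T) * \sum_(k < N) T ^+ k); first by congr (_ * _); ring.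
by rewrite -opprB mulNr -subrX1 opprB.
Qed.

Lemma T_divX : exists2 T', T' \is a polyOver (vringK v) & T = T' * 'X.
Proof.
exists (drop_poly 1 T).
  by apply/polyOverP => i; rewrite coef_drop_poly; move/polyOverP: T_vringK; apply.
have T0 : take_poly 1 T = 0.
  apply/polyP => -[|i]; rewrite coef_take_poly coef0 //=.
  by rewrite coefB coef1 coefCM mulVf // subrr.
by rewrite -{1}(poly_take_drop 1 T) T0 add0r expr1.
Qed.

Lemma vanishing_Xn : vanishing ('X^n - pK%:P * Uinv).
Proof.
have [T' hT' eT] := T_divX.
have -> : 'X^n - pK%:P * Uinv = G * Uinv + 'X^N * ('X^n * T' ^+ N).
  have eXn : 'X^n = 'X^n * (U * Uinv) + 'X^n * T ^+ N by rewrite U_Uinv; ring.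
  by rewrite {1}eXn eT exprMn; ring.
apply: vanishingD; first by apply: vanishingMr (conj hGpi hGE) _; apply: polyO_vringK Uinv_vringK.
by apply: vanishing_XN; apply: polyOM; [apply: polyOX polyO_X|apply: polyOX; apply: polyO_vringK].
Qed.

Lemma reduce_degree m r : r \is a polyOver (vringK v) ->
  exists R r', [/\ R \is a polyOver (vringK v), (size R <= n)%N,
    r' \is a polyOver (vringK v) & vanishing (r - (R + (pK ^+ m)%:P * r'))].
Proof.
move=> hr; elim: m => [|m [R [r' [hR hRs hr' hvan]]]].
  exists 0, r; rewrite rpred0 size_poly0 expr0 mul1r add0r subrr; split => //.
  by rewrite /vanishing horner0 comp_poly0; split; [apply: vge0|apply: inJ0].
have hdrop : drop_poly n r' \is a polyOver (vringK v).
  by apply/polyOverP => i; rewrite coef_drop_poly; move/polyOverP: hr'; apply.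
exists (R + (pK ^+ m)%:P * take_poly n r'), (Uinv * drop_poly n r'); split.
- rewrite rpredD ?rpredM ?polyOverC ?rpredX //.
  apply/polyOverP => i; rewrite coef_take_poly.
  by case: ifP; rewrite ?rpred0 //; move/polyOverP: hr'.
- apply: leq_trans (size_polyD _ _) _; rewrite geq_max hRs mul_polyC.
  exact: leq_trans (size_scale_leq _ _) (size_take_poly _ _).
- by rewrite rpredM ?Uinv_vringK.
have -> : r - (R + (pK ^+ m)%:P * take_poly n r' + (pK ^+ m.+1)%:P * (Uinv * drop_poly n r'))
    = (r - (R + (pK ^+ m)%:P * r')) + ((pK ^+ m)%:P * drop_poly n r') * ('X^n - pK%:P * Uinv).
  move: (take_poly n r') (drop_poly n r') (poly_take_drop n r') => A B <-.
  by rewrite exprS polyCM; ring.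
apply: vanishingD hvan (vanishingMl _ vanishing_Xn); apply: polyO_vringK.
by rewrite rpredM ?polyOverC ?rpredX.
Qed.

Lemma inJ_comp r : r \is a polyOver (vringK v) -> vge v N r.[piL] -> inJ (r \Po E).
Proof.
move=> hr hrpi; have [R [r' [hR hRs hr' hvan]]] := reduce_degree N hr.
have hpKN : vge v N (pK ^+ N).
  apply: vge_le (vgeX hv N hpKn); rewrite -PoszM lez_nat leq_pmulr //; exact: adim_gt0.
have [hrR1 hrR2] : vanishing (r - R).
  have -> : r - R = (r - (R + (pK ^+ N)%:P * r')) + (pK ^+ N)%:P * r' by ring.
  apply: vanishingD hvan _; apply: vanishingMr; first exact: vanishingC.
  exact: polyO_vringK.
have hRpi : vge v N R.[piL].
  by have := vgeB hv hrpi hrR1; rewrite hornerD hornerN opprB addrC subrK.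
have -> : r = (r - R) + R by rewrite subrK.
rewrite comp_polyD; apply: inJD hrR2 _.
have RK (i : 'I_n) : R`_i \in 1%VS by move/polyOverP: hR => /(_ i) /andP [].
have := vge_Kterms RK (m := N); rewrite -(horner_coef_wide _ hRs) => /(_ hRpi) hterm.
rewrite comp_polyE; apply: inJ_sum => i _; have [w hw ->] := E_expr i.
rewrite -mul_polyC mulrA -polyCM; apply: inJMr hw; apply: inJC.
exact: (hterm (Ordinal (leq_trans (ltn_ord i) hRs))).
Qed.

Lemma congJ_comp_vge r1 r2 :
  r1 \is a polyOver (vringK v) -> r2 \is a polyOver (vringK v) ->
  vge v N (r1.[piL] - r2.[piL]) -> congJ (r1 \Po E) (r2 \Po E).
Proof.
move=> h1 h2 h; rewrite /congJ -comp_polyB; apply: inJ_comp; first exact: rpredB.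
by rewrite hornerD hornerN.
Qed.

Lemma expansion_comp_alg_hom : Ad_alg_hom v piL N P (fun b => expansion b \Po E).
Proof.
have hK b : vge v 0 b -> expansion b \is a polyOver (vringK v) := @expansion_vringK b.
split=> [b hb|x y hx hy hxy|x y hx hy|x y hx hy|a ha].
- exact: polyO_comp (polyO_vringK (hK b hb)) polyO_E.
- by apply: congJ_comp_vge; rewrite ?hK ?horner_expansion.
- rewrite -comp_polyD; apply: congJ_comp_vge; rewrite ?rpredD ?hK ?hornerD //.
    exact: (vgeD hv).
  by rewrite !horner_expansion subrr; apply: vge0.
- rewrite -comp_polyM; apply: congJ_comp_vge; rewrite ?rpredM ?hK ?hornerM //.
    exact: (vgeMl hv).
  by rewrite !horner_expansion subrr; apply: vge0.
- rewrite -[X in congJ _ X](comp_polyC _ E); apply: congJ_comp_vge; rewrite ?hK //.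
    by rewrite polyOverC /vringK unfold_in /= rpredZ ?rpred1 // andbT; apply/vringP.
  by rewrite hornerC horner_expansion subrr; apply: vge0.
Qed.

Lemma expansion_comp_pi : congJ (expansion piL \Po E) E.
Proof.
rewrite -[X in congJ _ X]comp_polyX; apply: congJ_comp_vge; rewrite ?polyOverX ?expansion_vringK //.
  exact: vge0_pi.
by rewrite hornerX horner_expansion subrr; apply: vge0.
Qed.

End Reduction.
End Ideal.

Section Proposition.
Variables (N P c d : nat) (u : {poly L}) (piK : K) (f : nat -> K).
Hypothesis hN : N = (n + d)%N.
Hypothesis hP : (1 < P)%N.
Hypothesis hn : (1 < n)%N.
Hypothesis hcd : (c <= d)%N.
Hypothesis huO : polyO v u.
Hypothesis hu : exists w : {poly L}, polyO v w /\
  exists z : {poly L}, u * w - 1 = 'X^P * z.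
Hypothesis hpiK0 : piK != 0.
Hypothesis hpiK : v piK%:A = n%:Z.
Hypothesis hfO : forall i, vge v 0 (f i)%:A.
Hypothesis hfn : forall i, (i < n)%N -> f i = 0.
Hypothesis hF : forall m : int, exists M0, forall M, (M0 <= M)%N ->
  vge v m (piK%:A - \sum_(i < M) (f i)%:A * piL ^+ i).

Local Notation pK := (piK%:A : L).
Local Notation inJ := (inJ v piL N P).
Local Notation congJ := (congJ v piL N P).

Definition Fpoly M : {poly L} := \poly_(i < M) (f i)%:A.

Definition shift (x : {poly L}) := piL%:P + (piL ^+ c.+1)%:P * 'X * x.

Definition F_congr (x : {poly L}) :=
  exists M0, forall M, (M0 <= M)%N -> congJ (Fpoly M \Po shift x) pK%:P.

Definition coarse (s : L -> {poly L}) := forall b, vge v 0 b -> exists x z w,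
  polyO v x /\ polyO v z /\ polyO v w /\
  s b - b%:P = (piL ^+ c.+1)%:P * 'X * x + (piL ^+ N)%:P * z + 'X^P * w.

Definition fine (s : L -> {poly L}) := forall b, vge v 0 b -> exists x y z w,
  polyO v x /\ polyO v y /\ polyO v z /\ polyO v w /\
  s b - b%:P = (piL ^+ c.+1)%:P * 'X * (piL%:P * x + 'X * y)
               + (piL ^+ N)%:P * z + 'X^P * w.

Lemma Fpoly_vringK M : Fpoly M \is a polyOver (vringK v).
Proof.
apply/polyOverP => i; rewrite coef_poly; case: ifP => _; last exact: rpred0.
by rewrite /vringK unfold_in /= rpredZ ?rpred1 // andbT; apply/vringP.
Qed.

Lemma Fpoly_comp M y : Fpoly M \Po y = \sum_(i < M) ((f i)%:A)%:P * y ^+ i.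
Proof.
rewrite /Fpoly poly_def; elim: M => [|M IH]; first by rewrite !big_ord0 comp_poly0.
by rewrite !big_ord_recr /= comp_polyD IH comp_polyZ comp_Xn_poly mul_polyC.
Qed.

Lemma pK_vringK : pK \in vringK v.
Proof.
by rewrite /vringK unfold_in /= rpredZ ?rpred1 // andbT; apply/vringP; right; rewrite hpiK.
Qed.

Lemma Fpoly_approx : exists M1, forall M, (M1 <= M)%N -> vge v N (pK - (Fpoly M).[piL]).
Proof. by have [M1 h] := hF N; exists M1 => M /h; rewrite horner_poly. Qed.

(* Since [v pK = n], the term [f n piL^n] must cancel it modulo [piL^(n+1)]. *)
Lemma f_n_unit : (f n)%:A != 0 :> L /\ v (f n)%:A = 0.
Proof.
have [M1 h] := hF (n%:Z + 1); pose M := maxn M1 n.+1.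
have hM : (M1 <= M)%N by apply: leq_maxl.
apply: vge0_unit (hfO n) _ => hfn1; have hsum : vge v (n%:Z + 1) (\sum_(i < M) (f i)%:A * piL ^+ i).
  apply: (vge_sum hv) => i _; case: (ltngtP i n) => [lt|gt|->].
  - by rewrite hfn // scale0r mul0r; apply: vge0.
  - by apply: (vgeMl hv) (hfO i) _; apply: vge_le (vge_piX i); rewrite -PoszD lez_nat addn1.
  - by have := vgeM hv hfn1 (vge_piX n); rewrite addrC.
have := vgeD hv (h M hM) hsum; rewrite subrK; case=> [/eqP|].
  by rewrite scaler_eq0 oner_eq0 orbF (negbTE hpiK0).
by rewrite hpiK gerDl.
Qed.

Lemma shift_piL x : polyO v x -> exists2 w, polyO v w & shift x = piL%:P * w.
Proof.
move=> hx; exists (1 + (piL ^+ c)%:P * 'X * x); last by rewrite /shift exprS polyCM; ring.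
apply: polyOD; first by apply: polyOC; apply: vge1.
by apply: polyOM hx; apply: polyOM polyO_X; apply: polyOC; apply: vge0_piX.
Qed.

Lemma polyO_shift x : polyO v x -> polyO v (shift x).
Proof. by move/shift_piL => [w hw ->]; apply: polyOM hw; apply: polyOC vge0_pi. Qed.

Lemma polyO_shift_term x : polyO v x -> polyO v ((piL ^+ c.+1)%:P * 'X * x).
Proof. by apply: polyOM; apply: polyOM polyO_X; apply: polyOC; apply: vge0_piX. Qed.

Lemma alg_hom_of_Fe_congr x : polyO v x -> F_congr x ->
  exists s, Ad_alg_hom v piL N P s /\ congJ (s piL) (shift x).
Proof.
move=> hx [M0 hM0]; have [M1 hM1] := Fpoly_approx.
pose M := maxn (maxn M0 M1) n.+1.
have hnM : (n < M)%N by rewrite !leq_max leqnn orbT.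
pose U := drop_poly n (Fpoly M).
have FU : Fpoly M = U * 'X^n.
  rewrite -{1}(poly_take_drop n (Fpoly M)) -[RHS]add0r; congr (_ + _).
  apply/polyP => i; rewrite coef_take_poly coef_poly coef0; case: ifP => // hi.
  by rewrite hfn // scale0r; case: ifP.
have U0 : U`_0 = (f n)%:A by rewrite coef_drop_poly add0n coef_poly hnM.
have [fn0 vfn] := f_n_unit.
have hU : U \is a polyOver (vringK v).
  by apply/polyOverP => i; rewrite coef_drop_poly; move/polyOverP: (Fpoly_vringK M).
have hGpi : vge v N (U * 'X^n - pK%:P).[piL].
  rewrite -FU hornerD hornerN hornerC -opprB; apply: (vgeN hv); apply: hM1.
  by rewrite !leq_max leqnn orbT.
have hGE : inJ ((U * 'X^n - pK%:P) \Po shift x).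
  by rewrite -FU comp_polyB comp_polyC; apply: hM0; rewrite !leq_max leqnn.
have hpKn : vge v n%:Z pK by right; rewrite hpiK.
exists (fun b => expansion b \Po shift x); split.
  apply: (expansion_comp_alg_hom (shift_piL hx) pK_vringK hpKn hU) hGpi hGE;
    by rewrite U0.
apply: (expansion_comp_pi (shift_piL hx) pK_vringK hpKn hU) hGpi hGE; by rewrite U0.
Qed.

Lemma F_congr_of_alg_hom s x : Ad_alg_hom v piL N P s -> polyO v x ->
  congJ (s piL) (shift x) -> F_congr x.
Proof.
move=> hs hx hspi; have [hO hcong _ _ hK] := hs; have [M1 hM1] := Fpoly_approx.
have hpK : vge v 0 pK by right; rewrite hpiK.
exists M1 => M hM; have hFpi : vge v 0 (Fpoly M).[piL].
  by apply: vge_horner vge0_pi; apply: polyO_vringK; apply: Fpoly_vringK.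
have sF : congJ (s (Fpoly M).[piL]) pK%:P.
  apply: congJ_trans (hK piK hpK); apply: hcong => //.
  by rewrite -opprB; apply: (vgeN hv); apply: hM1.
apply: congJ_trans sF; apply: congJ_sym; apply: congJ_trans (alg_hom_horner hs (Fpoly_vringK M)) _.
apply: congJ_comp (hO _ vge0_pi) (polyO_shift hx) hspi.
exact: polyO_vringK (Fpoly_vringK M).
Qed.

(* [F_congr x] says that [H(X x)] is in [J] for an [H] independent of [x],
   and [X |-> X x] with [x(0)] a unit preserves membership in [J] both ways. *)
Lemma F_congr_transfer x y : polyO v x -> x`_0 != 0 -> v x`_0 = 0 -> polyO v y ->
  F_congr x -> F_congr y.
Proof.
move=> hx x0 vx0 hy [M0 hM0]; exists M0 => M hM.
pose H := (Fpoly M \Po (piL%:P + (piL ^+ c.+1)%:P * 'X)) - pK%:P.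
have HE z : H \Po ('X * z) = (Fpoly M \Po shift z) - pK%:P.
  rewrite /H /shift comp_polyB comp_polyC -comp_polyA comp_polyD comp_polyC comp_polyM.
  by rewrite comp_polyC comp_polyX mulrA.
have hH : polyO v H.
  apply: polyOB; last by apply: polyOC; right; rewrite hpiK.
  apply: polyO_comp; first by apply: polyO_vringK; apply: Fpoly_vringK.
  by apply: polyOD; [apply: polyOC vge0_pi|apply: polyOM polyO_X; apply: polyOC; apply: vge0_piX].
have /inJ_compXy /(_ hy) : inJ H by apply: (inJ_of_comp_Xunit hH hx x0 vx0); rewrite HE; apply: hM0.
by rewrite HE.
Qed.

Lemma coarse_of_shift s x : Ad_alg_hom v piL N P s -> polyO v x ->
  congJ (s piL) (shift x) -> coarse s.
Proof.
move=> hs hx hspi b hb.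
have [Q hQ [z [w [hz [hw eJ]]]]] := alg_hom_shift hs (polyO_shift_term hx) hspi hb.
exists (x * Q), z, w; do 3?split => //; first exact: polyOM.
by rewrite -addrA -eJ; ring.
Qed.

Lemma fine_of_shift s x : Ad_alg_hom v piL N P s -> polyO v x -> vge v 1 x`_0 ->
  congJ (s piL) (shift x) -> fine s.
Proof.
move=> hs hx hx0 hspi b hb.
have [Q hQ [z [w [hz [hw eJ]]]]] := alg_hom_shift hs (polyO_shift_term hx) hspi hb.
have ex : x = (x`_0 / piL)%:P * piL%:P + drop_poly 1 x * 'X.
  rewrite -{1}(poly_take_drop 1 x) expr1; congr (_ + _).
  apply/polyP => -[|i]; rewrite coef_take_poly coefCM coefC //= ?divfK //.
  by rewrite mulr0.
have hx0' : vge v 0 (x`_0 / piL).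
  by have := vge_divX (m := 0) (k := 1); rewrite expr1 add0r; apply.
have hx1 : polyO v (drop_poly 1 x) by move=> i; rewrite coef_drop_poly.
move: ex hx0' hx1; set x0' := x`_0 / piL; set x1 := drop_poly 1 x => ex hx0' hx1.
exists (x0'%:P * Q), (x1 * Q), z, w; do 4?split => //.
- by apply: polyOM hQ; apply: polyOC.
- exact: polyOM.
- by rewrite -addrA -eJ ex; ring.
Qed.

Lemma shift_of_coarse s : coarse s -> exists2 x, polyO v x & congJ (s piL) (shift x).
Proof.
move=> /(_ piL vge0_pi) [x [z [w [hx [hz [hw ex]]]]]]; exists x => //.
rewrite /congJ; have -> : s piL - shift x = (piL ^+ N)%:P * z + 'X^P * w.
  by rewrite /shift -[s piL](subrK piL%:P) ex; ring.
by apply: inJD; [apply: inJ_piN|apply: inJ_XP].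
Qed.

Lemma coef0_u_unit : u`_0 != 0 /\ v u`_0 = 0.
Proof.
case: hu => w [hw [z ez]].
have uw : u`_0 * w`_0 = 1.
  move/(congr1 (coefp 0)): ez; rewrite /= coefB coef0M coef1 coefXnM (ltn_trans _ hP) //.
  by move/eqP; rewrite subr_eq0 => /eqP.
have u0 : u`_0 != 0 by apply: contra_eq_neq uw => ->; rewrite mul0r eq_sym oner_neq0.
have w0 : w`_0 != 0 by apply: contra_eq_neq uw => ->; rewrite mulr0 eq_sym oner_neq0.
split=> //; move/(congr1 v): uw; rewrite (valM hv) // (val1 hv).
by move: (vge_val u0 (huO 0)) (vge_val w0 (hw 0)); move: (v u`_0) (v w`_0) => a b; lia.
Qed.

Lemma not_fine_of_shift s : congJ (s piL) (shift u) -> ~ fine s.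
Proof.
move=> hspi /(_ piL vge0_pi) [x [y [z [w [hx [hy [hz [hw ex]]]]]]]].
have hJ : inJ ((piL ^+ c.+1)%:P * ('X * (piL%:P * x + 'X * y - u))).
  have -> : (piL ^+ c.+1)%:P * ('X * (piL%:P * x + 'X * y - u))
      = (s piL - shift u) - ((piL ^+ N)%:P * z + 'X^P * w).
    by rewrite /shift -[s piL](subrK piL%:P) ex; ring.
  by apply: inJB hspi _; apply: inJD; [apply: inJ_piN|apply: inJ_XP].
have := (proj1 (inJP N P _) hJ).2 1 hP.
rewrite coefCM coefXM /= coefB coefD coefCM coefXM /= addr0.
have [u0 vu0] := coef0_u_unit.
have hpx : vge v 1 (piL * x`_0) by have := vgeM hv (vge_piX 1) (hx 0); rewrite expr1 addr0.
have nu0 : - u`_0 != 0 by rewrite oppr_eq0.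
have [h1 h2] := valD_unit hv nu0 (etrans (valN hv _) vu0) hpx.
move/(vge_val (mulf_neq0 (expf_neq0 _ hpiL0) h1)).
by rewrite (valM hv) ?expf_neq0 // val_piX h2 addr0 hN lez_nat; lia.
Qed.

Definition e_point := piL%:P + u * (piL ^+ c.+1)%:P * 'X.

Lemma e_point_shift : e_point = shift u.
Proof. by rewrite /e_point /shift; ring. Qed.

Definition cond_F := exists M0, forall M, (M0 <= M)%N ->
  congJ (\sum_(i < M) ((f i)%:A)%:P * e_point ^+ i) pK%:P.
Definition cond_alg_hom := exists s, Ad_alg_hom v piL N P s /\ congJ (s piL) e_point.
Definition cond_shift := exists s, Ad_alg_hom v piL N P s /\ coarse s /\ ~ fine s.

Lemma cond_FE : cond_F <-> F_congr u.
Proof.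
by split=> -[M0 h]; exists M0 => M /h; rewrite Fpoly_comp e_point_shift.
Qed.

Lemma conditions_tfae : [<-> cond_F; cond_alg_hom; cond_shift].
Proof.
have [u0 vu0] := coef0_u_unit; rewrite /cond_alg_hom e_point_shift; tfae.
- by move/cond_FE; apply: alg_hom_of_Fe_congr.
- case=> s [hs hspi]; exists s; split=> //; split; first exact: coarse_of_shift hs huO hspi.
  exact: not_fine_of_shift.
- case=> s [hs [/shift_of_coarse [x hx hspi] hfine]]; apply/cond_FE.
  have [x0 vx0] : x`_0 != 0 /\ v x`_0 = 0.
    apply: vge0_unit (hx 0) _ => hx0; apply: hfine.
    exact: fine_of_shift hs hx hx0 hspi.
  exact: F_congr_transfer hx x0 vx0 huO (F_congr_of_alg_hom hs hx hspi).
Qed.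

End Proposition.
End Setting.

Theorem proposition2p3
  (p : nat) (K : fieldType) (L : fieldExtType K) (v : L -> int)
  (piK : K) (piL : L)
  (hp : prime p)
  (hv : is_valuation v)
  (hKc : K_complete v)
  (hchar : residue_char v p)
  (hperf : residue_perfect v p)
  (hsep : separable 1%VS {:L}%VS)
  (hn : (1 < \dim {:L})%N)
  (htot : totally_ramified v)
  (hpiK0 : piK != 0) (hpiK : v piK%:A = (\dim {:L})%:Z)
  (hpiL0 : piL != 0) (hpiL : v piL = 1)
  (j c d : nat) (hj : (j <= logn p (\dim {:L}))%N) (hcd : (c <= d)%N)
  (u : {poly L})
  (huO : polyO v u)
  (hu : exists w : {poly L}, polyO v w /\
          exists z : {poly L}, u * w - 1 = 'X^(p ^ j.+1) * z)
  (f : nat -> K)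
  (hfO : forall i, vge v 0 (f i)%:A)
  (hfn : forall i, (i < \dim {:L})%N -> f i = 0)
  (hF : forall m : int, exists M0, forall M, (M0 <= M)%N ->
          vge v m (piK%:A - \sum_(i < M) (f i)%:A * piL ^+ i)) :
  let n := \dim {:L} in
  let P := (p ^ j.+1)%N in
  let N := (n + d)%N in
  let e := piL%:P + u * (piL ^+ c.+1)%:P * 'X in
  [<-> (exists M0, forall M, (M0 <= M)%N ->
          congJ v piL N P (\sum_(i < M) ((f i)%:A)%:P * e ^+ i) (piK%:A)%:P);
       (exists s : L -> {poly L}, Ad_alg_hom v piL N P s /\
          congJ v piL N P (s piL) e);
       (exists s : L -> {poly L}, Ad_alg_hom v piL N P s /\
          (forall b, vge v 0 b -> exists x z w, polyO v x /\ polyO v z /\ polyO v w /\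
             s b - b%:P = (piL ^+ c.+1)%:P * 'X * x + (piL ^+ N)%:P * z + 'X^P * w) /\
          ~ (forall b, vge v 0 b -> exists x y z w,
             polyO v x /\ polyO v y /\ polyO v z /\ polyO v w /\
             s b - b%:P = (piL ^+ c.+1)%:P * 'X * (piL%:P * x + 'X * y)
                          + (piL ^+ N)%:P * z + 'X^P * w))].
Proof.
move=> n P N e.
have hP : (1 < P)%N by apply: leq_ltn_trans (ltn_expl _ (prime_gt1 hp)).
exact: (conditions_tfae hv hpiL0 hpiL htot (d := d) (erefl N) hP hn hcd huO hu
  hpiK0 hpiK hfO hfn hF).
Qed.
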